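(* Let $\bar F^a,\bar F^b:\mathbb{R}^n\times\mathbb{R}^q\times\mathbb{R}_{>0}\to\mathbb{R}^n$ be closed-loop discrete-time models. If the pair $(\bar F^a,\bar F^b)$ is REPC, then $\bar F^a$ is REPMC with $\bar F^b$ (the pair is REPMC).
   Context: $\mathcal{K}_\infty$: continuous, strictly increasing, unbounded functions $\mathbb{R}_{\ge0}\to\mathbb{R}_{\ge0}$ vanishing at $0$. REPC: the pair $(\bar F^a,\bar F^b)$ is REPC if there exists $\phi\in\mathcal{K}_\infty$ such that for each $M,E\ge0$ there exist constants $K>0$, $T^*>0$ and $\rho\in\mathcal{K}_\infty$ with $|\bar F^a(x^a,e,T)-\bar F^b(x^b,e,T)|\le(1+KT)|x^a-x^b|+T\rho(T)(\max\{|x^a|,|x^b|\}+\phi(|e|))$ for all $|x^a|,|x^b|\le M$, $|e|\le E$, $T\in(0,T^* )$. REPMC: $\bar F^a$ is REPMC with $\bar F^b$ if there exists $\phi\in\mathcal{K}_\infty$ such that for each $M,E\ge0$ and $\mathcal{T},\eta>0$ there exist $T^*=T^*(M,E,\mathcal{T},\eta)>0$ and $\alpha:\mathbb{R}_{\ge0}\times\mathbb{R}_{\ge0}\to\mathbb{R}_{\ge0}\cup\{\infty\}$ with $\alpha(\cdot,T)$ nondecreasing for all $T\in[0,T^* )$ such that: $|x^a-x^b|\le\delta$ implies $|\bar F^a(x^a,e,T)-\bar F^b(x^b,e,T)|\le\alpha(\delta,T)$ for all $|x^a|,|x^b|\le M$, $|e|\le E$, $T\in(0,T^* )$; and for every sequence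 $T_0,T_1,\dots$ in $(0,T^* )$ and $k$ with $\sum_{i=0}^{k-1}T_i\le\mathcal{T}$, $\alpha^k(0,\{T_i\}):=\alpha(\cdots\alpha(\alpha(0,T_0),T_1)\cdots,T_{k-1})\le\eta M+\phi(E)$. *)

From HB Require Import structures.
From mathcomp Require Import all_boot all_order all_algebra.
From mathcomp Require Import all_classical all_reals ereal topology normedtype.
Set Implicit Arguments. Unset Strict Implicit. Unset Printing Implicit Defensive.
Import Order.TTheory GRing.Theory Num.Theory.
Import numFieldNormedType.Exports.
Local Open Scope ring_scope.
Local Open Scope classical_set_scope.

Definition enorm (R : realType) (n : nat) (x : 'rV[R]_n) : R :=
  Num.sqrt (\sum_(i < n) x ord0 i ^+ 2).

(* class K_infinity, for functions R_{>=0} -> R_{>=0} (represented as R -> R,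
   only the values on [0, +oo) matter) *)
Definition Kinf (R : realType) (f : R -> R) : Prop :=
  [/\ {within `[0, +oo[, continuous f},
      (forall x y : R, 0 <= x -> x < y -> f x < f y),
      (forall x : R, 0 <= x -> 0 <= f x),
      (forall B : R, exists x : R, 0 <= x /\ B < f x) &
      f 0 = 0].

Definition model (R : realType) (n q : nat) :=
  'rV[R]_n -> 'rV[R]_q -> R -> 'rV[R]_n.

Definition REPC (R : realType) (n q : nat) (Fa Fb : model R n q) : Prop :=
  exists phi : R -> R, Kinf phi /\
  forall M E : R, 0 <= M -> 0 <= E ->
  exists K Tstar : R, 0 < K /\ 0 < Tstar /\
  exists rho : R -> R, Kinf rho /\
  forall (xa xb : 'rV[R]_n) (e : 'rV[R]_q) (T : R),
    enorm xa <= M -> enorm xb <= M -> enorm e <= E -> 0 < T -> T < Tstar ->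
    enorm (Fa xa e T - Fb xb e T)
      <= (1 + K * T) * enorm (xa - xb)
         + T * rho T * (Num.max (enorm xa) (enorm xb) + phi (enorm e)).

(* iterate alpha^k(0,{T_i}) = alpha(...alpha(alpha(0,T_0),T_1)...,T_{k-1});
   with the convention that once the value +oo is reached it stays +oo. *)
Definition alpha_step (R : realType) (alpha : R -> R -> \bar R)
  (x : \bar R) (T : R) : \bar R :=
  match x with
  | EFin r => alpha r T
  | _ => +oo%E
  end.

Fixpoint alpha_iter (R : realType) (alpha : R -> R -> \bar R)
  (Ts : nat -> R) (k : nat) : \bar R :=
  match k with
  | O => 0%E
  | S k' => alpha_step alpha (alpha_iter alpha Ts k') (Ts k')
  end.

Definition REPMC (R : realType) (n q : nat) (Fa Fb : model R n q) : Prop :=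
  exists phi : R -> R, Kinf phi /\
  forall M E Tc eta : R, 0 <= M -> 0 <= E -> 0 < Tc -> 0 < eta ->
  exists Tstar : R, 0 < Tstar /\
  exists alpha : R -> R -> \bar R,
    [/\ (forall d T : R, 0 <= d -> 0 <= T -> T < Tstar -> (0 <= alpha d T)%E),
        (forall d1 d2 T : R, 0 <= d1 -> d1 <= d2 -> 0 <= T -> T < Tstar ->
            (alpha d1 T <= alpha d2 T)%E),
        (forall (delta : R) (xa xb : 'rV[R]_n) (e : 'rV[R]_q) (T : R),
            0 <= delta ->
            enorm xa <= M -> enorm xb <= M -> enorm e <= E -> 0 < T -> T < Tstar ->
            enorm (xa - xb) <= delta ->
            ((enorm (Fa xa e T - Fb xb e T))%:E <= alpha delta T)%E) &
        (forall (Ts : nat -> R) (k : nat),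
            (forall i, 0 < Ts i /\ Ts i < Tstar) ->
            \sum_(i < k) Ts i <= Tc ->
            (alpha_iter alpha Ts k <= (eta * M + phi E)%:E)%E)].

From mathcomp Require Import all_boot all_order all_algebra.
From mathcomp Require Import all_classical all_reals ereal topology normedtype.
From mathcomp Require Import sequences exp ring.
Set Implicit Arguments. Unset Strict Implicit. Unset Printing Implicit Defensive.
Import Order.TTheory GRing.Theory Num.Theory.
Import numFieldNormedType.Exports.
Local Open Scope ring_scope.
Local Open Scope classical_set_scope.

(* Take alpha(d, T) := (1 + K T) d + T rho(T) (M + phi(E)), the REPC estimate
   with its state-dependent factor bounded by M + phi(E).  Its iterates obey a
   discrete Gronwall recursion, so alpha^k(0, {T_i}) <= exp(K S) S eps (M + phi(E))
   with S = sum T_i <= Tc whenever rho(T_i) <= eps.  As rho is continuous at 0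
   with rho(0) = 0, T* can be chosen so that rho <= eps := min(eta, 1) / (exp(K Tc) Tc)
   for 0 < T < T*, and then the iterates stay below min(eta, 1) (M + phi(E)). *)

Section KinfTheory.
Variables (R : realType) (f : R -> R).
Hypothesis Kf : Kinf f.

Lemma Kinf_ge0 x : 0 <= x -> 0 <= f x.
Proof. by case: Kf => _ _ + _ _; apply. Qed.

Lemma Kinf_le x y : 0 <= x -> x <= y -> f x <= f y.
Proof.
case: Kf => _ f_incr _ _ _ x0; rewrite le_eqVlt => /predU1P[-> //|xy].
exact/ltW/f_incr.
Qed.

Lemma Kinf_small_at0 eps : 0 < eps ->
  exists2 d : R, 0 < d & forall t, 0 < t -> t < d -> f t <= eps.
Proof.
case: Kf => f_cont _ _ _ f0 eps0.
have [_ /cvgrPdist_lt /(_ _ eps0)] := (continuous_within_itvcyP 0 f).1 f_cont.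
rewrite near_withinE f0 => -[d /= d0 near0].
exists d => // t t0 td; apply/ltW.
have := near0 t; rewrite /= sub0r normrN gtr0_norm // => /(_ td t0).
by rewrite sub0r normrN; apply: le_lt_trans; exact: ler_norm.
Qed.

End KinfTheory.

Lemma enorm_ge0 (R : realType) (n : nat) (x : 'rV[R]_n) : 0 <= enorm x.
Proof. exact: sqrtr_ge0. Qed.

Section DiscreteGronwall.
Variables (R : realType) (K c : R).
Hypotheses (K0 : 0 <= K) (c0 : 0 <= c).

Lemma gronwall_step S T r : 0 <= S -> 0 <= T ->
  r <= expR (K * S) * S * c ->
  (1 + K * T) * r + T * c <= expR (K * (S + T)) * (S + T) * c.
Proof.
move=> S0 T0 r_le.
set X := expR (K * S); set Y := expR (K * T).
have X1 : 1 <= X by rewrite -expR0 ler_expR mulr_ge0.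
have KT_le_Y : 1 + K * T <= Y by exact: expR_ge1Dx.
have Y1 : 1 <= Y by rewrite (le_trans _ KT_le_Y) // lerDl mulr_ge0.
have first_term : (1 + K * T) * r <= Y * (X * S * c).
  apply: le_trans (ler_wpM2l _ r_le) (ler_wpM2r _ KT_le_Y).
    by rewrite addr_ge0 // mulr_ge0.
  by rewrite !mulr_ge0 // expR_ge0.
have second_term : T * c <= X * Y * (T * c).
  by rewrite ler_peMl ?mulr_ge0 // -[1]mulr1 ler_pM.
rewrite [K * (S + T)]mulrDr expRD -/X -/Y.
suff -> : X * Y * (S + T) * c = Y * (X * S * c) + X * Y * (T * c).
  exact: lerD.
by ring.
Qed.

Lemma discrete_gronwall (Ts r : nat -> R) : (forall i, 0 <= Ts i) ->
  r 0%N = 0 -> (forall j, r j.+1 <= (1 + K * Ts j) * r j + Ts j * c) ->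
  forall k, r k <= expR (K * \sum_(i < k) Ts i) * (\sum_(i < k) Ts i) * c.
Proof.
move=> Ts0 r0 r_rec; elim=> [|k IHk]; first by rewrite r0 big_ord0 !mulr0 mul0r.
apply: le_trans (r_rec k) _; rewrite big_ord_recr /=.
by apply: gronwall_step => //; exact: sumr_ge0.
Qed.

End DiscreteGronwall.

Lemma alpha_iter_EFin (R : realType) (a : R -> R -> R) (Ts : nat -> R) k :
  alpha_iter (fun d T => (a d T)%:E) Ts k = (iteri k (fun j d => a d (Ts j)) 0)%:E.
Proof. by elim: k => //= k ->. Qed.

Lemma le_expR_budget (R : realType) (K S Tc m : R) : 0 <= K -> 0 <= S ->
  S <= Tc -> 0 < Tc -> 0 <= m ->
  expR (K * S) * S * (m / (expR (K * Tc) * Tc)) <= m.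
Proof.
move=> K0 S0 STc Tc0 m0.
have budget0 : 0 < expR (K * Tc) * Tc by rewrite mulr_gt0 // expR_gt0.
rewrite mulrCA -[leRHS]mulr1 ler_wpM2l // ler_pdivrMr // mul1r.
rewrite ler_pM ?expR_ge0 //.
by rewrite ler_expR ler_wpM2l.
Qed.

Section REPCStep.
Variables (R : realType) (K B : R) (rho : R -> R).
Hypotheses (K0 : 0 <= K) (B0 : 0 <= B) (Krho : Kinf rho).

Definition repc_alpha (d T : R) : R := (1 + K * T) * d + T * rho T * B.

Lemma repc_alpha_ge0 d T : 0 <= d -> 0 <= T -> 0 <= repc_alpha d T.
Proof.
by move=> d0 T0; rewrite addr_ge0 ?mulr_ge0 ?addr_ge0 ?mulr_ge0 ?(Kinf_ge0 Krho).
Qed.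

Lemma le_repc_alpha D d P T : 0 <= T -> D <= d -> P <= B ->
  (1 + K * T) * D + T * rho T * P <= repc_alpha d T.
Proof.
move=> T0 Dd PB; rewrite lerD // ler_wpM2l ?mulr_ge0 ?(Kinf_ge0 Krho) //.
by rewrite addr_ge0 ?mulr_ge0.
Qed.

Lemma repc_alpha_iter_le eps (Ts : nat -> R) k : 0 <= eps ->
  (forall i, 0 <= Ts i) -> (forall i, rho (Ts i) <= eps) ->
  iteri k (fun j d => repc_alpha d (Ts j)) 0
    <= expR (K * \sum_(i < k) Ts i) * (\sum_(i < k) Ts i) * (eps * B).
Proof.
move=> eps0 Ts0 rho_le; apply: discrete_gronwall => // [|j].
  exact: mulr_ge0.
by rewrite /repc_alpha lerD2l mulrA ler_wpM2r // ler_wpM2l.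
Qed.

End REPCStep.

Theorem lemma2 (R : realType) (n q : nat) (Fa Fb : model R n q) :
  REPC Fa Fb -> REPMC Fa Fb.
Proof.
move=> [phi [Kphi repc]]; exists phi; split=> // M E Tc eta M0 E0 Tc0 eta0.
have [K [T0 [/ltW K0 [T00 [rho [Krho F_le]]]]]] := repc M E M0 E0.
pose B := M + phi E; have B0 : 0 <= B by rewrite addr_ge0 ?(Kinf_ge0 Kphi).
pose m := Num.min eta 1; have m0 : 0 <= m by rewrite le_min (ltW eta0) ler01.
pose eps := m / (expR (K * Tc) * Tc).
have eps0 : 0 < eps by rewrite divr_gt0 ?mulr_gt0 ?expR_gt0 // lt_min eta0 ltr01.
have [d d0 rho_small] := Kinf_small_at0 Krho eps0.
exists (Num.min T0 d); split; first by rewrite lt_min T00 d0.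
exists (fun dl T => (repc_alpha K B rho dl T)%:E); split.
- by move=> dl T dl0 T0' _; rewrite lee_fin repc_alpha_ge0 // ltW.
- move=> d1 d2 T _ d12 T0' _; rewrite lee_fin.
  exact: le_repc_alpha.
- move=> delta xa xb e T _ xaM xbM eE T_gt0; rewrite lt_min => /andP[T_lt _] xab.
  rewrite lee_fin; apply: le_trans (F_le _ _ _ _ xaM xbM eE T_gt0 T_lt) _.
  apply: le_repc_alpha => //; first exact: ltW.
  by rewrite /B lerD ?ge_max ?xaM ?xbM ?(Kinf_le Kphi) ?enorm_ge0.
- move=> Ts k Ts_range sum_le; rewrite alpha_iter_EFin lee_fin.
  have Ts0 i : 0 <= Ts i by case: (Ts_range i) => /ltW.
  have rho_le i : rho (Ts i) <= eps.
    by case: (Ts_range i) => Ts_gt0; rewrite lt_min => /andP[_ /(rho_small _ Ts_gt0)].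
  apply: le_trans (repc_alpha_iter_le K0 B0 k (ltW eps0) Ts0 rho_le) _.
  apply: (@le_trans _ _ (m * B)).
    by rewrite mulrA ler_wpM2r //; apply: le_expR_budget => //; exact: sumr_ge0.
  by rewrite mulrDr lerD ?ler_wpM2r ?ler_piMl ?(Kinf_ge0 Kphi) ?ge_min ?lexx ?orbT.
Qed.
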